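(* Let $h>0$ and let $L \in h\cdot(\tfrac12 + \mathbb{Z}_{>0})$. Let $Y$ be any random variable supported in $(-L, L]$, and let $\tilde{Y}$ be the output of $\mathsf{DiscretizeRV}$ applied to (the CDF of) $Y$ with mesh size $h$ and truncation parameter $L$. Then $\mathbb{E}[Y] = \mathbb{E}[\tilde{Y}]$, and there exists $\mu$ with $|\mu| \le \frac{h}{2}$ such that $|Y - \tilde{Y} - \mu| \le_{0} \frac{h}{2}$.
   Context: Procedure $\mathsf{DiscretizeRV}(Y, h, L)$: given the CDF of a random variable $Y$ supported in $(-L,L]$, a mesh size $h>0$ and $L \in h\cdot(\tfrac12+\mathbb{Z}_{>0})$, set $n = (L - h/2)/h$; for $i=-n,\dots,n$ set $q_i = \mathsf{CDF}_Y(ih + h/2) - \mathsf{CDF}_Y(ih - h/2)$; normalize $q \leftarrow q/\sum_{i=-n}^n q_i$; set $\mu_0 = \mathbb{E}[Y] - \sum_{i=-n}^n ih\, q_i$; output the random variable $\tilde{Y}$ that equals $ih + \mu_0$ with probability $q_i$ for $-n \le i \le n$. Coupling approximation: for random variables $A,B$, $h\ge 0$ and $\eta \ge 0$, we write $|A - B| \le_{\eta} h$ if there exists a coupling of $A$ and $B$ such that $\Pr[|A-B|>h] \le \eta$. *)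

From HB Require Import structures.
From mathcomp Require Import all_boot all_order all_algebra.
From mathcomp Require Import all_classical all_reals all_analysis.
Set Implicit Arguments. Unset Strict Implicit. Unset Printing Implicit Defensive.
Import Order.TTheory GRing.Theory Num.Theory.
Import numFieldNormedType.Exports.
Local Open Scope classical_set_scope.
Local Open Scope ring_scope.

Section Discretize.
Context {d : measure_display} {T : measurableType d} {R : realType}
  (P : probability T R) (X : {RV P >-> R}) (h L : R).

Definition cdfRV (t : R) : R := fine (P [set w | X w <= t]).

(* n = (L - h/2)/h  (a natural number under the hypothesis on L) *)
Definition discr_n : nat := Num.truncn ((L - h / 2) / h).

(* index j : 'I_(2n+1) stands for i = j - n in {-n, ..., n} *)
Definition discr_idx (j : 'I_(discr_n.*2.+1)) : R :=
  (j%:R - discr_n%:R).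

Definition discr_qraw (j : 'I_(discr_n.*2.+1)) : R :=
  cdfRV (discr_idx j * h + h / 2) - cdfRV (discr_idx j * h - h / 2).

Definition discr_q (j : 'I_(discr_n.*2.+1)) : R :=
  discr_qraw j / \sum_(k < discr_n.*2.+1) discr_qraw k.

Definition discr_mu0 : R :=
  fine ('E_P[X]) - \sum_(j < discr_n.*2.+1) discr_idx j * h * discr_q j.

(* support points ih + mu_0 of the output variable Ytilde *)
Definition discr_val (j : 'I_(discr_n.*2.+1)) : R :=
  discr_idx j * h + discr_mu0.

(* the law of Ytilde: Pr[Ytilde \in B] = sum_{i : ih + mu0 \in B} q_i *)
Definition discr_law (B : set R) : \bar R :=
  (\sum_(j < discr_n.*2.+1) discr_q j * \1_B (discr_val j))%:E.

Definition discr_mean : R :=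
  \sum_(j < discr_n.*2.+1) discr_val j * discr_q j.

End Discretize.

(* |A - B - mu| <=_eta eps : a coupling pi (a probability on R x R whose
   marginals are the laws lawA, lawB) with Pr[|A - B - mu| > eps] <= eta. *)
Definition coupling_approx {R : realType} (lawA lawB : set R -> \bar R)
  (mu eps eta : R) : Prop :=
  exists pi : probability (R * R)%type R,
    (forall A : set R, measurable A -> pi (A `*` setT) = lawA A) /\
    (forall B : set R, measurable B -> pi (setT `*` B) = lawB B) /\
    (pi [set z : R * R | (eps < `|z.1 - z.2 - mu|)%R] <= eta%:E)%E.

(* Cell i of the mesh is ]ih - h/2, ih + h/2]; the 2n+1 cells tile (-L, L],
   and q_i is exactly the probability that Y falls in cell i.  Rounding Y to
   the centre of its cell and adding mu_0 thus yields, jointly with Y, a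
   random variable distributed as Ytilde, and on the support
   Y - Ytilde = (Y - centre) - mu_0 lies within h/2 of -mu_0.  E[Ytilde] = E[Y]
   because the q_i sum to 1, and |mu_0| <= h/2 because mu_0 = E[Y - centre]
   is the mean of a rounding error bounded by h/2. *)

From HB Require Import structures.
From mathcomp Require Import all_boot all_order all_algebra.
From mathcomp Require Import all_classical all_reals all_analysis.
From mathcomp Require Import ring lra measurable_realfun.

Set Implicit Arguments.
Unset Strict Implicit.
Unset Printing Implicit Defensive.

Import Order.TTheory GRing.Theory Num.Theory.
Import numFieldNormedType.Exports.
Local Open Scope classical_set_scope.
Local Open Scope ring_scope.

Section grid.
Context {R : realType} (a h : R).
Hypothesis h_gt0 : 0 < h.

Definition grid_cell (j : nat) : set R := `]a + j%:R * h, a + j.+1%:R * h].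

Lemma grid_cell_inj i j y : grid_cell i y -> grid_cell j y -> i = j.
Proof.
have cell_lt (i' j' : nat) :
    (i' < j')%N -> grid_cell i' y -> grid_cell j' y -> False.
  move=> lt_ij; rewrite /grid_cell /= !in_itv /= => /andP[_ yi] /andP[yj _].
  have : i'.+1%:R * h <= j'%:R * h by rewrite ler_pM2r // ler_nat.
  lra.
case: (ltngtP i j) => // lt_ij yi yj.
  by case: (cell_lt _ _ lt_ij yi yj).
by case: (cell_lt _ _ lt_ij yj yi).
Qed.

Lemma bigcup_grid_cell m :
  \bigcup_(j < m) grid_cell j = `]a, a + m%:R * h]%classic.
Proof.
elim: m => [|m IH].
  by rewrite bigcup_mkord big_ord0 mul0r addr0 set_itvoc0.
rewrite bigcup_mkord big_ord_recr /= -bigcup_mkord IH.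
rewrite [RHS](@itv_bndbnd_setU _ _ _ (BRight (a + m%:R * h))) //.
  by rewrite bnd_simp lerDl mulr_ge0 // ltW.
by rewrite bnd_simp lerD2l ler_pM2r // ler_nat.
Qed.

End grid.

Section step_fun.
Context {R : realType} (m : nat) (F : 'I_m -> set R).

Definition step_fun (v : 'I_m -> R) (y : R) : R :=
  \sum_(j < m) v j * \1_(F j) y.

Lemma step_funE v j y : trivIset setT F -> F j y -> step_fun v y = v j.
Proof.
move=> tF Fjy; rewrite /step_fun (bigD1 j) //= indicE mem_set // mulr1.
rewrite big1 ?addr0 // => i ij; rewrite indicE memNset ?mulr0 // => Fiy.
by move: ij; rewrite (tF i j) ?eqxx //; exists y.
Qed.

Lemma measurable_step_fun v : (forall j, measurable (F j)) ->
  measurable_fun setT (step_fun v).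
Proof.
move=> mF; apply: measurable_sum => j.
by apply: measurable_funM => //; exact: measurable_indic.
Qed.

End step_fun.

Section expectation_bounds.
Local Open Scope ereal_scope.
Context d (T : measurableType d) (R : realType) (P : probability T R).

Lemma ae_full_measure (D : set T) (Q : T -> Prop) : measurable D -> P D = 1 ->
  (forall x, D x -> Q x) -> {ae P, forall x, Q x}.
Proof.
move=> mD PD1 DQ; exists (~` D); split.
- exact: measurableC.
- by rewrite probability_setC // PD1 subee.
- by move=> x /= nQx Dx; apply: nQx; exact: DQ.
Qed.

Lemma integrable_ae_bounded (f : T -> R) (M : R) : measurable_fun setT f ->
  {ae P, forall x, `|f x| <= M}%R -> P.-integrable setT (EFin \o f).
Proof.
move=> mf fM; apply/integrableP; split; first exact/measurable_EFinP.
apply: (le_lt_trans (integral_le_bound `|M|%:E _ _ _ _)) => //.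
- exact/measurable_EFinP.
- apply: filterS fM => x fxM _.
  by rewrite /= lee_fin (le_trans fxM) // ler_norm.
- rewrite lte_mul_pinfty //.
  by rewrite (le_lt_trans (probability_le1 _ measurableT)) ?ltry.
Qed.

Lemma fin_num_expectation_ae_bounded (f : T -> R) (M : R) :
  measurable_fun setT f -> {ae P, forall x, `|f x| <= M}%R ->
  'E_P[f] \is a fin_num.
Proof.
move=> mf fM; rewrite unlock; apply: integrable_fin_num => //.
exact: integrable_ae_bounded fM.
Qed.

Lemma expectation_ae_bounded (f : T -> R) (M : R) : (0 <= M)%R ->
  measurable_fun setT f -> {ae P, forall x, `|f x| <= M}%R ->
  (`|fine 'E_P[f]| <= M)%R.
Proof.
move=> M0 mf fM; have Efin := fin_num_expectation_ae_bounded mf fM.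
rewrite -lee_fin -abse_EFin fineK //.
rewrite unlock; apply: le_trans (le_abse_integral _ _ _) _ => //.
  exact/measurable_EFinP.
rewrite -[M%:E]mule1 -(probability_setT P).
apply: integral_le_bound => //; first exact/measurable_EFinP.
by apply: filterS fM => x fxM _; rewrite /= lee_fin.
Qed.

Lemma expectation_step_fun (X : {RV P >-> R}) m (F : 'I_m -> set R)
    (v : 'I_m -> R) : (forall j, measurable (F j)) ->
  'E_P[step_fun F v \o X] = (\sum_(j < m) v j * fine (P (X @^-1` F j)))%:E.
Proof.
move=> mF; have mXF j : measurable (X @^-1` F j) := measurable_funPTI X (mF j).
rewrite unlock /step_fun /=.
under eq_integral do rewrite -sumEFin.
rewrite integral_sum // => [|j]; last first.
  exact: integrableZl (integrable_indic _ (mXF j)).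
rewrite -sumEFin; apply: eq_bigr => j _.
rewrite EFinM fineK ?fin_num_measure //.
under eq_integral do rewrite EFinM.
rewrite integralZl //; last exact: integrable_indic (mXF j).
congr (_ * _).
transitivity (\int[P]_x (\1_(X @^-1` F j) x)%:E); first by [].
by rewrite integral_indic // setIT.
Qed.

End expectation_bounds.

Section graph_coupling.
Context d (T : measurableType d) (R : realType) (P : probability T R).
Variables (X : {RV P >-> R}) (g : R -> R).
Hypothesis mg : measurable_fun setT g.

Definition rv_graph (w : T) : R * R := (X w, g (X w)).

Lemma measurable_rv_graph : measurable_fun setT rv_graph.
Proof. by apply: measurable_fun_pair => //; exact: measurableT_comp. Qed.

HB.instance Definition _ :=
  isMeasurableFun.Build _ _ _ _ rv_graph measurable_rv_graph.

Lemma coupling_approx_graph (lawB : set R -> \bar R) (mu eps : R) :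
  (forall B, measurable B -> lawB B = P ((g \o X) @^-1` B)) ->
  {ae P, forall w, `|X w - g (X w) - mu| <= eps} ->
  coupling_approx (distribution P X) lawB mu eps 0.
Proof.
move=> lawBE close; exists (distribution P rv_graph); split; [|split].
- by move=> A _; congr (P _); apply/seteqP; split => w /=; [case|].
- move=> B mB; rewrite lawBE //; congr (P _).
  by apply/seteqP; split => w /=; [case|].
- have mfar : measurable [set w | eps < `|X w - g (X w) - mu|].
    have mdev : measurable_fun setT (fun w => `|X w - g (X w) - mu|).
      apply: measurableT_comp => //; apply: measurable_funB => //.
      by apply: measurable_funB => //; exact: measurableT_comp.
    have := mdev measurableT _ (measurable_itv `]eps, +oo[); rewrite setTI.
    by congr measurable; apply/seteqP; split => w; rewrite /= in_itv /= andbT.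
  rewrite [X in (X <= _)%E](_ : _ = P [set w | eps < `|X w - g (X w) - mu|]) //.
  rewrite (measure_negligible mfar) //.
  by apply: negligibleS close => w /= far; apply/negP; rewrite -ltNge.
Qed.

End graph_coupling.

Section cdf.
Context d (T : measurableType d) (R : realType) (P : probability T R).
Variable X : {RV P >-> R}.

Lemma cdfRV_sub (a b : R) : a <= b ->
  cdfRV X b - cdfRV X a = fine (P (X @^-1` `]a, b])).
Proof.
move=> ab; have cdf_pre t : [set w | X w <= t] = X @^-1` `]-oo, t].
  by apply/seteqP; split => w; rewrite /= in_itv.
have mpre (I : interval R) : measurable (X @^-1` [set` I]).
  exact: measurable_funPTI (measurable_itv _).
rewrite /cdfRV !cdf_pre (@itv_bndbnd_setU _ _ _ (BRight a)) ?bnd_simp //.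
rewrite preimage_setU measureU //; last first.
  apply/seteqP; split => w //=; rewrite !in_itv /= => -[Xa /andP[aX _]].
  by move: (lt_le_trans aX Xa); rewrite ltxx.
by rewrite fineD ?fin_num_measure // addrAC subrr add0r.
Qed.

End cdf.

Section discretize.
Context d (T : measurableType d) (R : realType) (P : probability T R).
Variables (X : {RV P >-> R}) (h L : R) (k : nat).
Hypotheses (h_gt0 : 0 < h) (L_def : L = h * (2^-1 + k%:R)).

Local Notation m := (discr_n h L).*2.+1.

Definition discr_cell (j : 'I_m) : set R := grid_cell (- L) h j.

Lemma measurable_discr_cell j : measurable (discr_cell j).
Proof. exact: measurable_itv. Qed.

Definition discr_map (y : R) : R :=
  step_fun discr_cell (fun j => discr_val X j) y.

Lemma measurable_discr_map : measurable_fun setT discr_map.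
Proof. by apply: measurable_step_fun; exact: measurable_discr_cell. Qed.

Lemma discr_nE : discr_n h L = k.
Proof.
rewrite /discr_n L_def (_ : (h * (2^-1 + k%:R) - h / 2) / h = k%:R) ?natrK //.
by field; rewrite gt_eqF.
Qed.

Lemma discr_cellE j : discr_cell j =
  `]discr_idx j * h - h / 2, discr_idx j * h + h / 2]%classic.
Proof.
rewrite /discr_cell /grid_cell /discr_idx.
have -> : (discr_n h L)%:R = k%:R :> R by rewrite discr_nE.
move: (nat_of_ord j) => i; rewrite -natr1.
have -> : - L + i%:R * h = (i%:R - k%:R) * h - h / 2.
  by rewrite L_def; field.
suff -> : - L + (i%:R + 1) * h = (i%:R - k%:R) * h + h / 2 by [].
by rewrite L_def; field.
Qed.

Lemma discr_cell_center j y : discr_cell j y -> `|y - discr_idx j * h| <= h / 2.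
Proof.
rewrite discr_cellE /= in_itv /= => /andP[y1 y2].
by rewrite ler_norml; apply/andP; split; lra.
Qed.

Lemma trivIset_discr_cell : trivIset setT discr_cell.
Proof.
by move=> i j _ _ [y [yi yj]]; apply/val_inj/(grid_cell_inj h_gt0 yi yj).
Qed.

Lemma bigcup_discr_cell :
  \bigcup_(j < m) grid_cell (- L) h j = `]- L, L]%classic.
Proof.
rewrite bigcup_grid_cell // discr_nE -addn1 -mul2n natrD natrM.
by have -> : - L + (2%:R * k%:R + 1%:R) * h = L by rewrite L_def; field.
Qed.

Hypothesis X_supp : P [set w | - L < X w <= L] = 1%E.

Lemma prob_support : P (X @^-1` `]- L, L]) = 1%E.
Proof.
by rewrite -X_supp; congr (P _); apply/seteqP; split => w; rewrite /= in_itv.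
Qed.

Lemma ae_discr_cell (Q : T -> Prop) :
  (forall w j, discr_cell j (X w) -> Q w) -> {ae P, forall w, Q w}.
Proof.
move=> cellQ; apply: (ae_full_measure (D := X @^-1` `]- L, L])).
- exact: measurable_funPTI (measurable_itv _).
- exact: prob_support.
move=> w; rewrite -bigcup_discr_cell => -[j /= jm Xw].
exact: (cellQ w (Ordinal jm)).
Qed.

Lemma sum_discr_cell_prob : \sum_(j < m) fine (P (X @^-1` discr_cell j)) = 1.
Proof.
have mcell j : measurable (X @^-1` discr_cell j).
  exact: measurable_funPTI (measurable_discr_cell j).
apply: EFin_inj; rewrite -sumEFin (eq_bigr (fun j => P (X @^-1` discr_cell j))).
  rewrite -measure_bigsetU_ord //; last first.
    move=> i j _ _ [w [/= ? ?]].
    by apply: trivIset_discr_cell => //; exists (X w).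
  rewrite /discr_cell -(bigcup_mkord m (fun j => X @^-1` grid_cell (- L) h j)).
  by rewrite -preimage_bigcup bigcup_discr_cell; exact: prob_support.
by move=> j _; rewrite fineK // fin_num_measure.
Qed.

Lemma discr_qE j : discr_q X j = fine (P (X @^-1` discr_cell j)).
Proof.
have qrawE i : discr_qraw X i = fine (P (X @^-1` discr_cell i)).
  have h2_ge0 : 0 <= h / 2 by rewrite divr_ge0 // ltW.
  rewrite /discr_qraw cdfRV_sub -?discr_cellE //.
  by rewrite lerD2l (le_trans _ h2_ge0) // oppr_le0.
by rewrite /discr_q (eq_bigr _ (fun i _ => qrawE i)) sum_discr_cell_prob divr1.
Qed.

Lemma sum_discr_q : \sum_(j < m) discr_q X j = 1.
Proof. by rewrite (eq_bigr _ (fun j _ => discr_qE j)) sum_discr_cell_prob. Qed.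

Lemma discr_mean_expectation : fine 'E_P[X] = discr_mean X h L.
Proof.
rewrite /discr_mean /discr_val; under eq_bigr do rewrite mulrDl.
by rewrite big_split /= -mulr_sumr sum_discr_q mulr1 /discr_mu0; ring.
Qed.

(* mu_0 is the mean of the rounding error [dev], which is at most h/2 on the
   support. *)
Lemma discr_mu0_bound : `|discr_mu0 X h L| <= h / 2.
Proof.
pose center := step_fun discr_cell (fun j => discr_idx j * h).
pose dev w := X w - center (X w).
have mX : measurable_fun setT X by [].
have mdev : measurable_fun setT dev.
  apply: measurable_funB => //; apply: measurableT_comp => //.
  exact: measurable_step_fun measurable_discr_cell.
have dev_ae : {ae P, forall w, `|dev w| <= h / 2}.
  apply: ae_discr_cell => w j Xw.
  rewrite /dev /center (step_funE _ trivIset_discr_cell Xw).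
  exact: discr_cell_center.
have X_ae : {ae P, forall w, `|X w| <= L}.
  apply: (ae_full_measure _ prob_support) => [|w /=].
    exact: measurable_funPTI (measurable_itv _).
  by rewrite in_itv /= ler_norml => /andP[? ?]; apply/andP; split; lra.
have Ecenter : ('E_P[center \o X] = 'E_P[X] - 'E_P[dev])%E.
  rewrite unlock -integralB_EFin //; first 1 last.
  - exact: integrable_ae_bounded X_ae.
  - exact: integrable_ae_bounded dev_ae.
  by apply: eq_integral => w _; rewrite -EFinB /dev /=; congr EFin; ring.
have sum_center : \sum_(j < m) discr_idx j * h * discr_q X j =
    fine 'E_P[X] - fine 'E_P[dev].
  rewrite -[RHS]/(fine (_%:E)) EFinB !fineK -?Ecenter.
  - rewrite expectation_step_fun; last exact: measurable_discr_cell.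
    by apply: eq_bigr => j _; rewrite discr_qE.
  - exact: fin_num_expectation_ae_bounded dev_ae.
  - exact: fin_num_expectation_ae_bounded X_ae.
rewrite /discr_mu0 sum_center opprB addrC subrK.
by apply: expectation_ae_bounded dev_ae; rewrite // divr_ge0 // ltW.
Qed.

Lemma discr_close :
  {ae P, forall w, `|X w - discr_map (X w) - - discr_mu0 X h L| <= h / 2}.
Proof.
apply: ae_discr_cell => w j Xw.
rewrite /discr_map (step_funE _ trivIset_discr_cell Xw).
have -> : X w - discr_val X j - - discr_mu0 X h L = X w - discr_idx j * h.
  by rewrite /discr_val; ring.
exact: discr_cell_center.
Qed.

(* Both sides are the mean of \1_B (discr_map X), which on cell j equals the
   constant \1_B (discr_val X j). *)
Lemma discr_lawE B : measurable B ->
  discr_law X h L B = P ((discr_map \o X) @^-1` B).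
Proof.
move=> mB; have mpre : measurable ((discr_map \o X) @^-1` B).
  rewrite -[_ @^-1` _]setTI; apply: measurableT_comp => //.
  exact: measurable_discr_map.
rewrite -expectation_indic //.
transitivity ('E_P[step_fun discr_cell (fun j => \1_B (discr_val X j)) \o X])%E.
  rewrite expectation_step_fun; last exact: measurable_discr_cell.
  rewrite /discr_law; congr EFin.
  by apply: eq_bigr => j _; rewrite discr_qE mulrC.
rewrite !unlock; apply: ae_eq_integral => //.
- apply/measurable_EFinP; apply: measurableT_comp => //.
  exact: measurable_step_fun measurable_discr_cell.
- exact/measurable_EFinP/measurable_indic.
apply: ae_discr_cell => w j Xw _.
rewrite /= (step_funE _ trivIset_discr_cell Xw).
by rewrite !indicE /discr_map -(step_funE _ trivIset_discr_cell Xw).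
Qed.

End discretize.

Theorem proposition2p7 (d : measure_display) (T : measurableType d)
  (R : realType) (P : probability T R) (X : {RV P >-> R}) (h L : R) :
  0 < h ->
  (exists k : nat, (0 < k)%N /\ L = h * (2^-1 + k%:R)) ->
  P [set w | - L < X w <= L] = 1%E ->
  fine ('E_P[X]) = discr_mean X h L /\
  exists mu : R, `|mu| <= h / 2 /\
    coupling_approx (distribution P X) (discr_law X h L) mu (h / 2) 0.
Proof.
move=> h_gt0 [k [_ L_def]] X_supp.
split; first exact: discr_mean_expectation h_gt0 L_def X_supp.
exists (- discr_mu0 X h L); split.
  by rewrite normrN; exact: discr_mu0_bound h_gt0 L_def X_supp.
apply: (coupling_approx_graph _ (discr_lawE h_gt0 L_def X_supp)).
- exact: measurable_discr_map.
- exact: discr_close h_gt0 L_def X_supp.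
Qed.
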